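(* Let $\mathbb{C}$ be a pointed protomodular category in which centralizers of Bourn-normal monomorphisms exist and are Bourn-normal monomorphisms. Suppose $A$ is an abelian and complete${}^*$ object of $\mathbb{C}$ and $B$ is a strong-complete object of $\mathbb{C}$. If $\hom(B,A)=\{0\}$, then $B\times A$ is complete${}^*$.
   Context: A pointed category with finite limits is protomodular if the split short five lemma holds. Morphisms $f:A'\to X$, $g:B'\to X$ commute if some $\varphi:A'\times B'\to X$ has $\varphi\langle1,0\rangle=f$, $\varphi\langle0,1\rangle=g$; the centralizer $z_f:Z_X(A',f)\to X$ of $f$ is the terminal object among morphisms into $X$ commuting with $f$. An object $A$ is abelian if $1_A$ commutes with $1_A$. A protosplit monomorphism is a kernel of a split epimorphism; a monomorphism $m:S\to Y$ is Bourn-normal if there is an equivalence relation $(R,r_1,r_2)$ on $Y$ and $\tilde m:S\times S\to R$ with $r_1\tilde m=m\pi_1$, $r_2\tilde m=m\pi_2$ and the square $r_1\tilde m=m\pi_1$ a pullback. An object $X$ is complete${}^*$ if every Bourn-normal monomorphism with domain $X$ is a split monomorphism, and strong-complete if every protosplit monomorphism with domain $X$ is a split monomorphism with a unique retraction. *)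

Record Category := {
  Ob :> Type;
  Hom : Ob -> Ob -> Type;
  comp : forall {a b c : Ob}, Hom b c -> Hom a b -> Hom a c;
  idm : forall a : Ob, Hom a a;
  comp_assoc : forall a b c d (h : Hom c d) (g : Hom b c) (f : Hom a b),
      comp h (comp g f) = comp (comp h g) f;
  comp_id_l : forall a b (f : Hom a b), comp (idm b) f = f;
  comp_id_r : forall a b (f : Hom a b), comp f (idm a) = f
}.

Arguments Hom {C} : rename.
Arguments comp {C a b c} : rename.
Arguments idm {C} : rename.

Notation "g \o f" := (comp g f) (at level 40, left associativity).

Section Notions.
Variable C : Category.

Definition is_initial (x : C) : Prop := forall y : C, exists! f : Hom x y, True.
Definition is_terminal (x : C) : Prop := forall y : C, exists! f : Hom y x, True.
Definition is_zero_object (Z : C) : Prop := is_initial Z /\ is_terminal Z.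

Definition is_zero_mor (Z : C) {x y : C} (f : Hom x y) : Prop :=
  exists (a : Hom x Z) (b : Hom Z y), f = b \o a.

Definition is_iso {x y : C} (f : Hom x y) : Prop :=
  exists g : Hom y x, g \o f = idm x /\ f \o g = idm y.

Definition is_mono {x y : C} (m : Hom x y) : Prop :=
  forall (t : C) (u v : Hom t x), m \o u = m \o v -> u = v.

Definition is_split_mono {x y : C} (m : Hom x y) : Prop :=
  exists r : Hom y x, r \o m = idm x.

Definition is_product (a b P : C) (p1 : Hom P a) (p2 : Hom P b) : Prop :=
  forall (t : C) (f : Hom t a) (g : Hom t b),
    exists! h : Hom t P, p1 \o h = f /\ p2 \o h = g.

Definition is_pullback {a b c P : C} (f : Hom a c) (g : Hom b c)
    (q1 : Hom P a) (q2 : Hom P b) : Prop :=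
  f \o q1 = g \o q2 /\
  forall (t : C) (u : Hom t a) (v : Hom t b), f \o u = g \o v ->
    exists! h : Hom t P, q1 \o h = u /\ q2 \o h = v.

Definition has_finite_limits : Prop :=
  (exists T : C, is_terminal T) /\
  forall (a b c : C) (f : Hom a c) (g : Hom b c),
    exists (P : C) (q1 : Hom P a) (q2 : Hom P b), is_pullback f g q1 q2.

Definition is_kernel (Z : C) {k0 a b : C} (k : Hom k0 a) (p : Hom a b) : Prop :=
  is_zero_mor Z (p \o k) /\
  forall (t : C) (g : Hom t a), is_zero_mor Z (p \o g) ->
    exists! h : Hom t k0, k \o h = g.

(* split short five lemma *)
Definition protomodular (Z : C) : Prop :=
  forall (A B K A' B' K' : C)
    (p : Hom A B) (s : Hom B A) (k : Hom K A)
    (p' : Hom A' B') (s' : Hom B' A') (k' : Hom K' A')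
    (u : Hom K K') (v : Hom A A') (w : Hom B B'),
    p \o s = idm B -> is_kernel Z k p ->
    p' \o s' = idm B' -> is_kernel Z k' p' ->
    v \o k = k' \o u -> p' \o v = w \o p -> v \o s = s' \o w ->
    is_iso u -> is_iso w -> is_iso v.

(* f : A' -> X and g : B' -> X commute: some phi : A' x B' -> X with
   phi <1,0> = f and phi <0,1> = g *)
Definition commute (Z : C) {A' B' X : C} (f : Hom A' X) (g : Hom B' X) : Prop :=
  exists (P : C) (p1 : Hom P A') (p2 : Hom P B'),
    is_product A' B' P p1 p2 /\
    exists phi : Hom P X,
      (forall i1 : Hom A' P, p1 \o i1 = idm A' -> is_zero_mor Z (p2 \o i1) ->
         phi \o i1 = f) /\
      (forall i2 : Hom B' P, is_zero_mor Z (p1 \o i2) -> p2 \o i2 = idm B' ->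
         phi \o i2 = g).

Definition is_centralizer (Z : C) {A' X Zc : C} (f : Hom A' X) (z : Hom Zc X) : Prop :=
  commute Z f z /\
  forall (W : C) (g : Hom W X), commute Z f g ->
    exists! h : Hom W Zc, z \o h = g.

Definition is_abelian (Z : C) (A : C) : Prop := commute Z (idm A) (idm A).

Definition is_equivalence_relation {Y R : C} (r1 r2 : Hom R Y) : Prop :=
  (forall (t : C) (u v : Hom t R), r1 \o u = r1 \o v -> r2 \o u = r2 \o v -> u = v) /\
  (forall (t : C) (a : Hom t Y), exists u : Hom t R, r1 \o u = a /\ r2 \o u = a) /\
  (forall (t : C) (u : Hom t R), exists v : Hom t R, r1 \o v = r2 \o u /\ r2 \o v = r1 \o u) /\
  (forall (t : C) (u v : Hom t R), r2 \o u = r1 \o v ->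
     exists w : Hom t R, r1 \o w = r1 \o u /\ r2 \o w = r2 \o v).

Definition is_protosplit_mono (Z : C) {S Y : C} (m : Hom S Y) : Prop :=
  exists (Q : C) (p : Hom Y Q) (s : Hom Q Y), p \o s = idm Q /\ is_kernel Z m p.

Definition is_bourn_normal {S Y : C} (m : Hom S Y) : Prop :=
  is_mono m /\
  exists (P : C) (pi1 pi2 : Hom P S), is_product S S P pi1 pi2 /\
  exists (R : C) (r1 r2 : Hom R Y), is_equivalence_relation r1 r2 /\
  exists mt : Hom P R,
    r1 \o mt = m \o pi1 /\ r2 \o mt = m \o pi2 /\ is_pullback r1 m mt pi1.

Definition is_complete_star (X : C) : Prop :=
  forall (Y : C) (m : Hom X Y), is_bourn_normal m -> is_split_mono m.

Definition is_strong_complete (Z : C) (X : C) : Prop :=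
  forall (Y : C) (m : Hom X Y), is_protosplit_mono Z m ->
    exists! r : Hom Y X, r \o m = idm X.

Definition centralizers_of_normal_monos_normal (Z : C) : Prop :=
  forall (S X : C) (m : Hom S X), is_bourn_normal m ->
    exists (Zc : C) (z : Hom Zc X), is_centralizer Z m z /\ is_bourn_normal z.

End Notions.


(* Let m : B x A -> Y be Bourn-normal. As A is abelian, the restriction of m to A
   commutes with m and so factors through the centralizer z of m. Conversely,
   anything lying in both m and z commutes with B inside B x A, and
   strong-completeness of B forces its B-component to vanish; so A is the
   intersection of the Bourn-normal monomorphisms m and z, hence Bourn-normal in Y,
   and completeness of A gives q : Y -> A with q m = p2 (using hom(B, A) = 0).
   Then B is the intersection of m with the kernel of q, so it is Bourn-normal and
   split by some r with r m = p1, and <r, q> is a retraction of m. *)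

Section Pointed.
Variable C : Category.
Variable Z : C.
Hypothesis hZ : is_zero_object C Z.

Local Notation is_zero f := (is_zero_mor C Z f).

(* Composites are kept left-associated; [rew_comp H] rewrites [H : f \o g = k] or
   [H : f \o g \o h = k] inside such a chain. *)
Lemma whisker2 {b c d : C} {f : Hom c d} {g : Hom b c} {k : Hom b d} :
  f \o g = k -> forall e (x : Hom d e), x \o f \o g = x \o k.
Proof. intros H e x. now rewrite <- H, comp_assoc. Qed.

Lemma whisker3 {a b c d : C} {f : Hom c d} {g : Hom b c} {h : Hom a b} {k : Hom a d} :
  f \o g \o h = k -> forall e (x : Hom d e), x \o f \o g \o h = x \o k.
Proof. intros H e x. now rewrite <- H, !comp_assoc. Qed.

Ltac simpl_comp :=
  repeat (rewrite comp_assoc || rewrite comp_id_l || rewrite comp_id_r).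
Ltac simpl_comp_in H :=
  repeat (rewrite comp_assoc in H || rewrite comp_id_l in H || rewrite comp_id_r in H).
Ltac rew_comp H :=
  simpl_comp; first [rewrite H | rewrite (whisker3 H) | rewrite (whisker2 H)]; simpl_comp.

(** * Zero morphisms, products and kernels *)

Lemma to_zero_unique {x : C} (a a' : Hom x Z) : a = a'.
Proof. destruct (proj2 hZ x) as [a0 [_ U]]. now rewrite <- (U a I), <- (U a' I). Qed.

Lemma from_zero_unique {y : C} (b b' : Hom Z y) : b = b'.
Proof. destruct (proj1 hZ y) as [b0 [_ U]]. now rewrite <- (U b I), <- (U b' I). Qed.

Lemma to_zero (x : C) : inhabited (Hom x Z).
Proof. destruct (proj2 hZ x) as [a _]. exact (inhabits a). Qed.

Lemma from_zero (y : C) : inhabited (Hom Z y).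
Proof. destruct (proj1 hZ y) as [b _]. exact (inhabits b). Qed.

Lemma zero_through {x y : C} (a : Hom x Z) (b : Hom Z y) : is_zero (b \o a).
Proof. now exists a, b. Qed.

Lemma zero_mor_unique {x y : C} (f g : Hom x y) : is_zero f -> is_zero g -> f = g.
Proof.
  intros [a [b ->]] [a' [b' ->]].
  now rewrite (to_zero_unique a a'), (from_zero_unique b b').
Qed.

Lemma zero_mor_exists (x y : C) : exists f : Hom x y, is_zero f.
Proof.
  destruct (to_zero x) as [a], (from_zero y) as [b].
  exists (b \o a). apply zero_through.
Qed.

Lemma zero_mor_comp_l {x y w : C} (f : Hom x y) (g : Hom y w) :
  is_zero f -> is_zero (g \o f).
Proof. intros [a [b ->]]. exists a, (g \o b). apply comp_assoc. Qed.

Lemma zero_mor_comp_r {w x y : C} (f : Hom w x) (g : Hom x y) :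
  is_zero g -> is_zero (g \o f).
Proof. intros [a [b ->]]. exists (a \o f), b. symmetry. apply comp_assoc. Qed.

Ltac zero_search :=
  first [ assumption | apply zero_through
        | apply zero_mor_comp_r; zero_search | apply zero_mor_comp_l; zero_search
        | rewrite <- comp_assoc; zero_search ].
Ltac zero_tac := simpl_comp; zero_search.
Ltac zero_eq := apply zero_mor_unique; zero_tac.

Lemma iso_idm (x : C) : is_iso C (idm x).
Proof. exists (idm x). split; apply comp_id_l. Qed.

Lemma product_hom_ext {X Y P : C} {p1 : Hom P X} {p2 : Hom P Y}
  (hP : is_product C X Y P p1 p2) {t : C} (h h' : Hom t P) :
  p1 \o h = p1 \o h' -> p2 \o h = p2 \o h' -> h = h'.
Proof.
  intros E1 E2. destruct (hP t (p1 \o h') (p2 \o h')) as [h0 [_ U]].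
  now rewrite <- (U h (conj E1 E2)), <- (U h' (conj eq_refl eq_refl)).
Qed.

Lemma product_sym {X Y P : C} {p1 : Hom P X} {p2 : Hom P Y} :
  is_product C X Y P p1 p2 -> is_product C Y X P p2 p1.
Proof.
  intros hP t f g. destruct (hP t g f) as [h [[E1 E2] U]].
  exists h. split; [now split|]. intros h' [F1 F2]. now apply U.
Qed.

Lemma product_pair {X Y P : C} {p1 : Hom P X} {p2 : Hom P Y}
  (hP : is_product C X Y P p1 p2) {t : C} (f : Hom t X) (g : Hom t Y) :
  exists h, p1 \o h = f /\ p2 \o h = g.
Proof. destruct (hP t f g) as [h [H _]]. now exists h. Qed.

Lemma product_inj1 {X Y P : C} {p1 : Hom P X} {p2 : Hom P Y}
  (hP : is_product C X Y P p1 p2) :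
  exists i1 : Hom X P, p1 \o i1 = idm X /\ is_zero (p2 \o i1).
Proof.
  destruct (zero_mor_exists X Y) as [z0 Hz].
  destruct (product_pair hP (idm X) z0) as [i1 [E1 E2]].
  exists i1. now rewrite E2.
Qed.

Lemma product_inj2 {X Y P : C} {p1 : Hom P X} {p2 : Hom P Y}
  (hP : is_product C X Y P p1 p2) :
  exists i2 : Hom Y P, is_zero (p1 \o i2) /\ p2 \o i2 = idm Y.
Proof.
  destruct (product_inj1 (product_sym hP)) as [i2 [E1 E2]]. now exists i2.
Qed.

Lemma product_inj1_kernel {X Y P : C} {p1 : Hom P X} {p2 : Hom P Y}
  (hP : is_product C X Y P p1 p2) (i1 : Hom X P) :
  p1 \o i1 = idm X -> is_zero (p2 \o i1) -> is_kernel C Z i1 p2.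
Proof.
  intros E1 E2. split; [exact E2|].
  intros t g Hg. exists (p1 \o g). split.
  - apply (product_hom_ext hP).
    + now rew_comp E1.
    + simpl_comp. zero_eq.
  - intros h' <-. now rew_comp E1.
Qed.

Lemma product_inj1_protosplit {X Y P : C} {p1 : Hom P X} {p2 : Hom P Y}
  (hP : is_product C X Y P p1 p2) (i1 : Hom X P) :
  p1 \o i1 = idm X -> is_zero (p2 \o i1) -> is_protosplit_mono C Z i1.
Proof.
  intros E1 E2. destruct (product_inj2 hP) as [i2 [F1 F2]].
  exists Y, p2, i2. split; [exact F2|]. now apply (product_inj1_kernel hP).
Qed.

Lemma strong_complete_retraction_eq_proj {S X P : C} (hS : is_strong_complete C Z S)
  {p1 : Hom P S} {p2 : Hom P X} (hP : is_product C S X P p1 p2) (i1 : Hom S P) :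
  p1 \o i1 = idm S -> is_zero (p2 \o i1) -> forall r, r \o i1 = idm S -> r = p1.
Proof.
  intros E1 E2 r Er.
  destruct (hS P i1 (product_inj1_protosplit hP i1 E1 E2)) as [r0 [_ U]].
  now rewrite <- (U r Er), <- (U p1 E1).
Qed.

Lemma pullback_hom_ext {a b c P : C} {f : Hom a c} {g : Hom b c}
  {q1 : Hom P a} {q2 : Hom P b} (hpb : is_pullback C f g q1 q2) {t : C} (u v : Hom t P) :
  q1 \o u = q1 \o v -> q2 \o u = q2 \o v -> u = v.
Proof.
  intros E1 E2. destruct hpb as [sq U].
  assert (E : f \o (q1 \o v) = g \o (q2 \o v)) by (simpl_comp; now rewrite sq).
  destruct (U t _ _ E) as [h0 [_ V]].
  now rewrite <- (V u (conj E1 E2)), <- (V v (conj eq_refl eq_refl)).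
Qed.

Lemma pullback_mono {a b c P : C} {f : Hom a c} {g : Hom b c}
  {q1 : Hom P a} {q2 : Hom P b} (hpb : is_pullback C f g q1 q2) :
  is_mono C f -> is_mono C q2.
Proof.
  intros hf t u v E. apply (pullback_hom_ext hpb); [|exact E].
  apply hf. simpl_comp. rewrite (proj1 hpb). now rew_comp E.
Qed.

Lemma kernel_mono {K P Q : C} {k : Hom K P} {p : Hom P Q} :
  is_kernel C Z k p -> is_mono C k.
Proof.
  intros [Hz Hu] t u v E.
  assert (H : is_zero (p \o (k \o v))) by (simpl_comp; zero_tac).
  destruct (Hu t (k \o v) H) as [h [_ U]].
  now rewrite <- (U u E), <- (U v eq_refl).
Qed.

Lemma kernel_restrict_mono {K E P Q : C} {k : Hom K P} {p : Hom P Q}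
  (e : Hom E P) (j : Hom K E) :
  is_mono C e -> is_kernel C Z k p -> e \o j = k -> is_kernel C Z j (p \o e).
Proof.
  intros he hk Ej. pose proof (kernel_mono hk) as hkm.
  destruct hk as [Hz Hu]. split; [rewrite <- comp_assoc, Ej; exact Hz|].
  intros t g Hg. rewrite <- comp_assoc in Hg.
  destruct (Hu t (e \o g) Hg) as [w [Hw _]].
  exists w. split.
  - apply he. now rewrite <- Hw, <- Ej, comp_assoc.
  - intros w' Ew'. apply hkm. rewrite Hw, <- Ej, <- Ew'. apply comp_assoc.
Qed.


Hypothesis hlim : has_finite_limits C.

Lemma pullback_exists {a b c : C} (f : Hom a c) (g : Hom b c) :
  exists (P : C) (q1 : Hom P a) (q2 : Hom P b), is_pullback C f g q1 q2.
Proof. exact (proj2 hlim a b c f g). Qed.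

Lemma product_exists (X Y : C) : exists P p1 p2, is_product C X Y P p1 p2.
Proof.
  destruct (to_zero X) as [a], (to_zero Y) as [b].
  destruct (pullback_exists a b) as [P [q1 [q2 [_ U]]]].
  exists P, q1, q2. intros t f g. apply U. apply to_zero_unique.
Qed.

Lemma kernel_exists {Y A : C} (q : Hom Y A) : exists K (k : Hom K Y), is_kernel C Z k q.
Proof.
  destruct (from_zero A) as [b].
  destruct (pullback_exists q b) as [K [k [a hK]]].
  exists K, k. split; [rewrite (proj1 hK); apply zero_through|].
  intros t g Hg. destruct (to_zero t) as [c].
  assert (E : q \o g = b \o c) by (apply zero_mor_unique; [exact Hg | apply zero_through]).
  destruct (proj2 hK t g c E) as [w [[W1 _] _]].
  exists w. split; [exact W1|].
  intros w' Ew'. apply (pullback_hom_ext hK).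
  - now rewrite W1, Ew'.
  - apply to_zero_unique.
Qed.

(** * Bourn-normal monomorphisms *)

(* Bourn's "m is normal to R", with the pullback condition of [is_bourn_normal]
   unfolded: [R] is total on [S], and [S] is closed under [R]. *)
Definition is_normal_to {S Y R : C} (m : Hom S Y) (r1 r2 : Hom R Y) : Prop :=
  is_equivalence_relation C r1 r2 /\
  (forall (t : C) (x y : Hom t S), exists u : Hom t R, r1 \o u = m \o x /\ r2 \o u = m \o y) /\
  (forall (t : C) (u : Hom t R) (x : Hom t S), r1 \o u = m \o x ->
     exists y : Hom t S, r2 \o u = m \o y).

Lemma bourn_normal_iff {S Y : C} (m : Hom S Y) :
  is_bourn_normal C m <->
  is_mono C m /\ exists (R : C) (r1 r2 : Hom R Y), is_normal_to m r1 r2.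
Proof.
  split.
  - intros [hm [PS [pi1 [pi2 [hPS [R [r1 [r2 [hR [mt [M1 [M2 hpb]]]]]]]]]]]].
    split; [exact hm|]. exists R, r1, r2. split; [exact hR|]. split.
    + intros t x y. destruct (product_pair hPS x y) as [h [H1 H2]].
      exists (mt \o h). split; [rew_comp M1; now rew_comp H1 | rew_comp M2; now rew_comp H2].
    + intros t u x E. destruct (proj2 hpb t u x E) as [h [[H1 _] _]].
      exists (pi2 \o h). rewrite <- H1. now rew_comp M2.
  - intros [hm [R [r1 [r2 [hR [htot hsat]]]]]].
    split; [exact hm|].
    destruct (product_exists S S) as [PS [pi1 [pi2 hPS]]].
    exists PS, pi1, pi2. split; [exact hPS|]. exists R, r1, r2. split; [exact hR|].
    destruct (htot PS pi1 pi2) as [mt [M1 M2]].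
    exists mt. split; [exact M1|]. split; [exact M2|]. split; [exact M1|].
    intros t u x E. destruct (hsat t u x E) as [y Ey].
    destruct (product_pair hPS x y) as [h [H1 H2]].
    assert (Hu : mt \o h = u).
    { apply (proj1 hR).
      - rew_comp M1. now rew_comp H1.
      - rew_comp M2. now rew_comp H2. }
    exists h. split; [now split|].
    intros h' [Eu Ex]. apply (product_hom_ext hPS).
    + now rewrite H1, Ex.
    + rewrite H2. apply hm. rewrite <- Ey, <- Eu. now rew_comp M2.
Qed.

Lemma kernel_pair_equivalence {Y A R : C} (q : Hom Y A) (e1 e2 : Hom R Y) :
  is_pullback C q q e1 e2 -> is_equivalence_relation C e1 e2.
Proof.
  intros hE. pose proof (proj1 hE) as Esq.
  split; [|split; [|split]].
  - intros t u v Eu Ev. exact (pullback_hom_ext hE u v Eu Ev).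
  - intros t a. destruct (proj2 hE t a a eq_refl) as [u [Hu _]]. now exists u.
  - intros t u.
    assert (H : q \o (e2 \o u) = q \o (e1 \o u)) by (simpl_comp; now rewrite Esq).
    destruct (proj2 hE t _ _ H) as [v [Hv _]]. now exists v.
  - intros t u v Euv.
    assert (H : q \o (e1 \o u) = q \o (e2 \o v))
      by (simpl_comp; rewrite Esq; rew_comp Euv; now rewrite Esq).
    destruct (proj2 hE t _ _ H) as [w [Hw _]]. now exists w.
Qed.

Lemma kernel_bourn_normal {K Y A : C} (k : Hom K Y) (q : Hom Y A) :
  is_kernel C Z k q -> is_bourn_normal C k.
Proof.
  intros hk. apply bourn_normal_iff. split; [exact (kernel_mono hk)|].
  destruct (pullback_exists q q) as [R [e1 [e2 hE]]].
  exists R, e1, e2. split; [exact (kernel_pair_equivalence q e1 e2 hE)|]. split.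
  - intros t x y.
    assert (H : q \o (k \o x) = q \o (k \o y)) by (destruct hk; zero_eq).
    destruct (proj2 hE t _ _ H) as [u [Hu _]]. now exists u.
  - intros t u x E.
    assert (H : is_zero (q \o (e2 \o u))).
    { simpl_comp. rewrite <- (proj1 hE). rew_comp E. destruct hk; zero_tac. }
    destruct (proj2 hk t _ H) as [y [Hy _]]. now exists y.
Qed.

Definition is_relation_meet {Y R1 R2 R : C} (a1 a2 : Hom R1 Y) (b1 b2 : Hom R2 Y)
    (d1 : Hom R R1) (d2 : Hom R R2) : Prop :=
  a1 \o d1 = b1 \o d2 /\ a2 \o d1 = b2 \o d2 /\
  forall (t : C) (u1 : Hom t R1) (u2 : Hom t R2),
    a1 \o u1 = b1 \o u2 -> a2 \o u1 = b2 \o u2 ->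
    exists! w : Hom t R, d1 \o w = u1 /\ d2 \o w = u2.

Lemma relation_meet_exists {Y R1 R2 : C} (a1 a2 : Hom R1 Y) (b1 b2 : Hom R2 Y) :
  exists R (d1 : Hom R R1) (d2 : Hom R R2), is_relation_meet a1 a2 b1 b2 d1 d2.
Proof.
  destruct (product_exists Y Y) as [YY [y1 [y2 hYY]]].
  destruct (product_pair hYY a1 a2) as [c1 [C11 C12]].
  destruct (product_pair hYY b1 b2) as [c2 [C21 C22]].
  destruct (pullback_exists c1 c2) as [R [d1 [d2 [Rsq hR]]]].
  exists R, d1, d2. split; [|split].
  - rewrite <- C11, <- C21. now rew_comp Rsq.
  - rewrite <- C12, <- C22. now rew_comp Rsq.
  - intros t u1 u2 E1 E2. apply hR. apply (product_hom_ext hYY).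
    + rew_comp C11. now rew_comp C21.
    + rew_comp C12. now rew_comp C22.
Qed.

Lemma equivalence_relation_meet {Y R1 R2 R : C} (a1 a2 : Hom R1 Y) (b1 b2 : Hom R2 Y)
  (d1 : Hom R R1) (d2 : Hom R R2) :
  is_equivalence_relation C a1 a2 -> is_equivalence_relation C b1 b2 ->
  is_relation_meet a1 a2 b1 b2 d1 d2 ->
  is_equivalence_relation C (a1 \o d1) (a2 \o d1).
Proof.
  intros [ja [rfa [sya tra]]] [jb [rfb [syb trb]]] [D1 [D2 hR]].
  assert (lift : forall t (u1 : Hom t R1) (u2 : Hom t R2),
             a1 \o u1 = b1 \o u2 -> a2 \o u1 = b2 \o u2 ->
             exists w : Hom t R, a1 \o d1 \o w = a1 \o u1 /\ a2 \o d1 \o w = a2 \o u1).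
  { intros t u1 u2 E1 E2. destruct (hR t u1 u2 E1 E2) as [w [[W1 _] _]].
    exists w. now rewrite <- W1, !comp_assoc. }
  split; [|split; [|split]].
  - intros t u v Eu Ev. simpl_comp_in Eu. simpl_comp_in Ev.
    assert (E1 : a1 \o (d1 \o v) = b1 \o (d2 \o v)) by (simpl_comp; now rewrite D1).
    assert (E2 : a2 \o (d1 \o v) = b2 \o (d2 \o v)) by (simpl_comp; now rewrite D2).
    destruct (hR t _ _ E1 E2) as [w [_ U]].
    rewrite <- (U u), <- (U v); [reflexivity | now split |].
    split; [apply ja; simpl_comp; assumption|].
    apply jb; simpl_comp; rewrite <- ?D1, <- ?D2; assumption.
  - intros t a. destruct (rfa t a) as [u1 [U1 U1']], (rfb t a) as [u2 [U2 U2']].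
    destruct (lift t u1 u2) as [w [W1 W2]]; [congruence | congruence |].
    exists w. rewrite W1, W2. now split.
  - intros t u. destruct (sya t (d1 \o u)) as [v1 [V1 V1']].
    destruct (syb t (d2 \o u)) as [v2 [V2 V2']].
    destruct (lift t v1 v2) as [w [W1 W2]].
    + rewrite V1, V2. now rew_comp D2.
    + rewrite V1', V2'. now rew_comp D1.
    + exists w. rewrite W1, W2, V1, V1'. simpl_comp. now split.
  - intros t u v Euv. simpl_comp_in Euv.
    assert (E1 : a2 \o (d1 \o u) = a1 \o (d1 \o v)) by (simpl_comp; exact Euv).
    assert (E2 : b2 \o (d2 \o u) = b1 \o (d2 \o v))
      by (simpl_comp; rewrite <- D1, <- D2; exact Euv).
    destruct (tra t _ _ E1) as [w1 [W1 W1']], (trb t _ _ E2) as [w2 [W2 W2']].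
    destruct (lift t w1 w2) as [w [X1 X2]].
    + rewrite W1, W2. now rew_comp D1.
    + rewrite W1', W2'. now rew_comp D2.
    + exists w. rewrite X1, X2, W1, W1'. simpl_comp. now split.
Qed.

Lemma bourn_normal_pullback_comp {Y S1 S2 S : C} (m1 : Hom S1 Y) (m2 : Hom S2 Y)
  (s1 : Hom S S1) (s2 : Hom S S2) :
  is_bourn_normal C m1 -> is_bourn_normal C m2 -> is_pullback C m1 m2 s1 s2 ->
  is_bourn_normal C (m1 \o s1).
Proof.
  intros [hm1 [R1 [a1 [a2 [hR1 [tot1 sat1]]]]]]%bourn_normal_iff
         [hm2 [R2 [b1 [b2 [hR2 [tot2 sat2]]]]]]%bourn_normal_iff hS.
  pose proof (proj1 hS) as Ssq.
  apply bourn_normal_iff. split.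
  { intros t u v E. simpl_comp_in E. apply (pullback_hom_ext hS).
    - apply hm1. now simpl_comp.
    - apply hm2. simpl_comp. now rewrite <- Ssq. }
  destruct (relation_meet_exists a1 a2 b1 b2) as [R [d1 [d2 hR]]].
  pose proof hR as [D1 [D2 lift]].
  exists R, (a1 \o d1), (a2 \o d1).
  split; [exact (equivalence_relation_meet a1 a2 b1 b2 d1 d2 hR1 hR2 hR)|]. split.
  - intros t x y.
    destruct (tot1 t (s1 \o x) (s1 \o y)) as [u1 [U1 U1']].
    destruct (tot2 t (s2 \o x) (s2 \o y)) as [u2 [U2 U2']].
    destruct (lift t u1 u2) as [w [[W1 _] _]].
    + rewrite U1, U2. now rew_comp Ssq.
    + rewrite U1', U2'. now rew_comp Ssq.
    + exists w. split; rew_comp W1; [rewrite U1 | rewrite U1']; now simpl_comp.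
  - intros t u x E. simpl_comp_in E.
    assert (E1 : a1 \o (d1 \o u) = m1 \o (s1 \o x)) by (simpl_comp; exact E).
    assert (E2 : b1 \o (d2 \o u) = m2 \o (s2 \o x))
      by (simpl_comp; rewrite <- D1, <- Ssq; exact E).
    destruct (sat1 t _ _ E1) as [y1 Y1], (sat2 t _ _ E2) as [y2 Y2].
    assert (E3 : m1 \o y1 = m2 \o y2) by (rewrite <- Y1, <- Y2; now rew_comp D2).
    destruct (proj2 hS t y1 y2 E3) as [y [[Hy _] _]].
    exists y. rewrite <- comp_assoc, Y1, <- Hy. apply comp_assoc.
Qed.

Lemma normal_to_kernel {S Y R : C} (m : Hom S Y) (r1 r2 : Hom R Y) (k : Hom S R) :
  is_mono C m -> is_normal_to m r1 r2 ->
  is_zero (r1 \o k) -> r2 \o k = m -> is_kernel C Z k r1.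
Proof.
  intros hm [[jr _] [_ sat]] K1 K2. split; [exact K1|].
  intros t g Hg. destruct (zero_mor_exists t S) as [z Hz].
  assert (E : r1 \o g = m \o z) by zero_eq.
  destruct (sat t g z E) as [y Ey].
  exists y. split.
  - apply jr; [zero_eq | now rew_comp K2].
  - intros y' <-. apply hm. rewrite <- Ey. now rew_comp K2.
Qed.

(* [S] sits in [R] as the pairs [(0, s)], a kernel of the split epimorphism [r1];
   the retraction given by strong-completeness, read on the diagonal, splits [m]. *)
Lemma strong_complete_bourn_normal_split {S Y : C} (hS : is_strong_complete C Z S)
  (m : Hom S Y) : is_bourn_normal C m -> is_split_mono C m.
Proof.
  intros [hm [R [r1 [r2 hR]]]]%bourn_normal_iff.
  pose proof hR as [[jr [refl _]] [tot _]].
  destruct (product_exists S S) as [PS [pi1 [pi2 hPS]]].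
  destruct (tot PS pi1 pi2) as [mt [M1 M2]].
  destruct (product_inj2 hPS) as [i2 [I1 I2]].
  assert (hk : is_kernel C Z (mt \o i2) r1).
  { apply (normal_to_kernel m r1 r2); [exact hm | exact hR | rew_comp M1; zero_tac |].
    rew_comp M2. now rew_comp I2. }
  destruct (refl Y (idm Y)) as [dl [Dl1 Dl2]].
  destruct (hS R (mt \o i2)) as [rho [Hrho _]]; [exists Y, r1, dl; now split|].
  assert (Hrm : rho \o mt = pi2).
  { apply (strong_complete_retraction_eq_proj hS (product_sym hPS) i2 I2 I1).
    now rewrite <- comp_assoc. }
  destruct (product_pair hPS (idm S) (idm S)) as [dg [G1 G2]].
  assert (Hdl : dl \o m = mt \o dg).
  { apply jr.
    - rew_comp Dl1. rew_comp M1. now rew_comp G1.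
    - rew_comp Dl2. rew_comp M2. now rew_comp G2. }
  exists (rho \o dl). now rewrite <- comp_assoc, Hdl, comp_assoc, Hrm.
Qed.

(** * Consequences of protomodularity *)

Hypothesis hprot : protomodular C Z.

(* [phi] is pulled back along [m]; the pullback contains both injections, so by the
   split short five lemma it is all of [P]. *)
Lemma product_map_factors_through_mono {X Y P W M : C} {p1 : Hom P X} {p2 : Hom P Y}
  (hP : is_product C X Y P p1 p2) (i1 : Hom X P) (i2 : Hom Y P)
  (E1 : p1 \o i1 = idm X) (E2 : is_zero (p2 \o i1))
  (F1 : is_zero (p1 \o i2)) (F2 : p2 \o i2 = idm Y)
  (m : Hom M W) (phi : Hom P W) (a : Hom X M) (b : Hom Y M) :
  is_mono C m -> m \o a = phi \o i1 -> m \o b = phi \o i2 ->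
  exists phi', phi = m \o phi'.
Proof.
  intros hm Ha Hb.
  destruct (pullback_exists m phi) as [E [e1 [e2 hpb]]].
  destruct (proj2 hpb X a i1 Ha) as [j1 [[_ J1] _]].
  destruct (proj2 hpb Y b i2 Hb) as [j2 [[_ J2] _]].
  assert (hi2 : is_kernel C Z i2 p1) by exact (product_inj1_kernel (product_sym hP) i2 F2 F1).
  assert (He2 : is_iso C e2).
  { apply (hprot E X Y P X Y (p1 \o e2) j1 j2 p1 i1 i2 (idm Y) e2 (idm X)).
    - rew_comp J1. exact E1.
    - exact (kernel_restrict_mono e2 j2 (pullback_mono hpb hm) hi2 J2).
    - exact E1.
    - exact hi2.
    - now rewrite J2, comp_id_r.
    - now rewrite comp_id_l.
    - now rewrite J1, comp_id_r.
    - apply iso_idm.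
    - apply iso_idm. }
  destruct He2 as [g [_ G]].
  exists (e1 \o g).
  rewrite <- (comp_id_r _ _ _ phi), <- G. simpl_comp. now rewrite (proj1 hpb).
Qed.

Lemma product_injections_jointly_epic {X Y P W : C} {p1 : Hom P X} {p2 : Hom P Y}
  (hP : is_product C X Y P p1 p2) (i1 : Hom X P) (i2 : Hom Y P)
  (E1 : p1 \o i1 = idm X) (E2 : is_zero (p2 \o i1))
  (F1 : is_zero (p1 \o i2)) (F2 : p2 \o i2 = idm Y) (f g : Hom P W) :
  f \o i1 = g \o i1 -> f \o i2 = g \o i2 -> f = g.
Proof.
  intros H1 H2.
  destruct (product_exists W W) as [Q [q1 [q2 hQ]]].
  destruct (product_pair hQ (idm W) (idm W)) as [D [D1 D2]].
  assert (hD : is_mono C D).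
  { intros t u v E. rewrite <- (comp_id_l C _ _ u), <- (comp_id_l C _ _ v), <- D1.
    now rewrite <- !comp_assoc, E. }
  destruct (product_pair hQ f g) as [phi [P1 P2]].
  assert (Hi : forall V (i : Hom V P), f \o i = g \o i -> D \o (f \o i) = phi \o i).
  { intros V i Hfg. apply (product_hom_ext hQ).
    - rew_comp D1. now rew_comp P1.
    - rew_comp D2. rew_comp P2. now rewrite Hfg. }
  destruct (product_map_factors_through_mono hP i1 i2 E1 E2 F1 F2 D phi (f \o i1) (f \o i2)
              hD (Hi _ i1 H1) (Hi _ i2 H2)) as [phi' Ephi].
  rewrite <- P1, <- P2, Ephi. simpl_comp. now rewrite D1, D2.
Qed.

(** * Commuting morphisms *)

Lemma commute_postcomp {A' B' X W : C} (f : Hom A' X) (g : Hom B' X) (h : Hom X W) :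
  commute C Z f g -> commute C Z (h \o f) (h \o g).
Proof.
  intros [P [p1 [p2 [hP [phi [H1 H2]]]]]].
  exists P, p1, p2. split; [exact hP|]. exists (h \o phi).
  split; intros; rewrite <- comp_assoc; f_equal; auto.
Qed.

Lemma commute_precomp {A' B' A'' B'' X : C} (f : Hom A' X) (g : Hom B' X)
  (a : Hom A'' A') (b : Hom B'' B') :
  commute C Z f g -> commute C Z (f \o a) (g \o b).
Proof.
  intros [P [p1 [p2 [hP [phi [H1 H2]]]]]].
  destruct (product_exists A'' B'') as [Q [q1 [q2 hQ]]].
  destruct (product_pair hP (a \o q1) (b \o q2)) as [ab [AB1 AB2]].
  destruct (product_inj1 hP) as [e1 [E11 E12]], (product_inj2 hP) as [e2 [E21 E22]].
  exists Q, q1, q2. split; [exact hQ|]. exists (phi \o ab). split.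
  - intros i1 I1 I2.
    assert (Hi : ab \o i1 = e1 \o a).
    { apply (product_hom_ext hP).
      + rew_comp AB1. rew_comp I1. now rew_comp E11.
      + rew_comp AB2. zero_eq. }
    rewrite <- (H1 e1 E11 E12). now rew_comp Hi.
  - intros i2 I1 I2.
    assert (Hi : ab \o i2 = e2 \o b).
    { apply (product_hom_ext hP).
      + rew_comp AB1. zero_eq.
      + rew_comp AB2. rew_comp I2. now rew_comp E22. }
    rewrite <- (H2 e2 E21 E22). now rew_comp Hi.
Qed.

Lemma commute_reflect_mono {A' B' M X : C} (m : Hom M X) (a : Hom A' M) (b : Hom B' M) :
  is_mono C m -> commute C Z (m \o a) (m \o b) -> commute C Z a b.
Proof.
  intros hm [P [p1 [p2 [hP [phi [H1 H2]]]]]].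
  destruct (product_inj1 hP) as [e1 [E11 E12]], (product_inj2 hP) as [e2 [E21 E22]].
  destruct (product_map_factors_through_mono hP e1 e2 E11 E12 E21 E22 m phi a b hm)
    as [phi' ->]; [now rewrite H1 | now rewrite H2 |].
  exists P, p1, p2. split; [exact hP|]. exists phi'.
  split; intros; apply hm; rewrite comp_assoc; auto.
Qed.

(* Strong-completeness makes the retraction [phi] of the injection [B -> B x T]
   equal to the projection, which kills [T]. *)
Lemma strong_complete_commute_zero {B T : C} (hB : is_strong_complete C Z B)
  (g : Hom T B) : commute C Z (idm B) g -> is_zero g.
Proof.
  intros [Q [q1 [q2 [hQ [phi [H1 H2]]]]]].
  destruct (product_inj1 hQ) as [k1 [K11 K12]], (product_inj2 hQ) as [k2 [K21 K22]].
  rewrite <- (H2 k2 K21 K22).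
  rewrite (strong_complete_retraction_eq_proj hB hQ k1 K11 K12 phi (H1 k1 K11 K12)).
  exact K21.
Qed.

Lemma abelian_injection_central {A B P : C} {p1 : Hom P B} {p2 : Hom P A}
  (hA : is_abelian C Z A) (hP : is_product C B A P p1 p2) (iA : Hom A P) :
  is_zero (p1 \o iA) -> p2 \o iA = idm A -> commute C Z (idm P) iA.
Proof.
  intros IA1 IA2.
  destruct hA as [Q [q1 [q2 [hQ [add [Add1 Add2]]]]]].
  destruct (product_inj1 hQ) as [j1 [J11 J12]], (product_inj2 hQ) as [j2 [J21 J22]].
  destruct (product_exists P A) as [PA [s1 [s2 hPA]]].
  destruct (product_pair hQ (p2 \o s1) s2) as [sum [S1 S2]].
  destruct (product_pair hP (p1 \o s1) (add \o sum)) as [alpha [A1 A2]].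
  exists PA, s1, s2. split; [exact hPA|]. exists alpha. split.
  - intros i1 I1 I2.
    assert (Hs : sum \o i1 = j1 \o p2).
    { apply (product_hom_ext hQ).
      + rew_comp S1. rew_comp I1. now rew_comp J11.
      + rew_comp S2. zero_eq. }
    apply (product_hom_ext hP).
    + rew_comp A1. now rew_comp I1.
    + rew_comp A2. rew_comp Hs. now rew_comp (Add1 j1 J11 J12).
  - intros i2 I1 I2.
    assert (Hs : sum \o i2 = j2).
    { apply (product_hom_ext hQ).
      + rew_comp S1. zero_eq.
      + rew_comp S2. rew_comp I2. now rewrite J22. }
    apply (product_hom_ext hP).
    + rew_comp A1. zero_eq.
    + rew_comp A2. rew_comp Hs. now rewrite (Add2 j2 J21 J22), IA2.
Qed.

Lemma kernel_pullback {K P Q Y N : C} (p : Hom P Q) (i : Hom K P) (m : Hom P Y)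
  (n : Hom N Y) (h : Hom K N) :
  is_kernel C Z i p -> is_mono C n -> n \o h = m \o i ->
  (forall t (u : Hom t P) (v : Hom t N), m \o u = n \o v -> is_zero (p \o u)) ->
  is_pullback C m n i h.
Proof.
  intros hi hn Eh hzero. split; [now symmetry|].
  intros t u v Euv. destruct (proj2 hi t u (hzero t u v Euv)) as [w [Hw _]].
  exists w. split; [split; [exact Hw|]|].
  - apply hn. rewrite <- Euv, <- Hw. now rew_comp Eh.
  - intros w' [Ew' _]. apply (kernel_mono hi). now rewrite Hw, Ew'.
Qed.

Section ProductOfCompleteObjects.
Variables (A B P : C) (p1 : Hom P B) (p2 : Hom P A).
Hypothesis hP : is_product C B A P p1 p2.
Hypothesis hBs : is_strong_complete C Z B.

Lemma abelian_factor_retraction (hcent : centralizers_of_normal_monos_normal C Z)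
  (hAab : is_abelian C Z A) (hAc : is_complete_star C A)
  (hhom : forall f : Hom B A, is_zero f) {Y : C} (m : Hom P Y) :
  is_bourn_normal C m -> exists q : Hom Y A, q \o m = p2.
Proof.
  intros hmn. pose proof (proj1 hmn) as hm.
  destruct (product_inj1 hP) as [iB [IB1 IB2]], (product_inj2 hP) as [iA [IA1 IA2]].
  destruct (hcent P Y m hmn) as [Zc [z [[hcomm huniv] hzn]]].
  assert (hcA : commute C Z m (m \o iA)).
  { pose proof (commute_postcomp _ _ m (abelian_injection_central hAab hP iA IA1 IA2)) as H.
    now rewrite comp_id_r in H. }
  destruct (huniv A (m \o iA) hcA) as [h [Hh _]].
  assert (hpb : is_pullback C m z iA h).
  { apply (kernel_pullback p1); [| exact (proj1 hzn) | exact Hh |].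
    - exact (product_inj1_kernel (product_sym hP) iA IA2 IA1).
    - intros t u v Euv.
      apply strong_complete_commute_zero; [exact hBs|]. rewrite <- IB1.
      apply commute_postcomp. apply (commute_reflect_mono m); [exact hm|].
      rewrite Euv. exact (commute_precomp m z iB v hcomm). }
  destruct (hAc Y (m \o iA) (bourn_normal_pullback_comp m z iA h hmn hzn hpb)) as [q Hq].
  exists q. apply (product_injections_jointly_epic hP iB iA IB1 IB2 IA1 IA2).
  - apply zero_mor_unique; [apply hhom | exact IB2].
  - rewrite <- comp_assoc, Hq. now symmetry.
Qed.

Lemma strong_complete_factor_retraction {Y : C} (m : Hom P Y) (q : Hom Y A) :
  is_bourn_normal C m -> q \o m = p2 -> exists r : Hom Y B, r \o m = p1.
Proof.
  intros hmn Hq.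
  destruct (product_inj1 hP) as [iB [IB1 IB2]], (product_inj2 hP) as [iA [IA1 IA2]].
  destruct (kernel_exists q) as [K [k hk]].
  assert (HzB : is_zero (q \o (m \o iB))) by (rew_comp Hq; exact IB2).
  destruct (proj2 hk B (m \o iB) HzB) as [g [Hg _]].
  assert (hpb : is_pullback C m k iB g).
  { apply (kernel_pullback p2); [| exact (kernel_mono hk) | exact Hg |].
    - exact (product_inj1_kernel hP iB IB1 IB2).
    - intros t u v Euv. rewrite <- Hq, <- comp_assoc, Euv. destruct hk; zero_tac. }
  destruct (strong_complete_bourn_normal_split hBs (m \o iB)
              (bourn_normal_pullback_comp m k iB g hmn (kernel_bourn_normal k q hk) hpb))
    as [r Hr].
  exists r. apply (strong_complete_retraction_eq_proj hBs hP iB IB1 IB2).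
  now rewrite <- comp_assoc.
Qed.

End ProductOfCompleteObjects.
End Pointed.

Theorem proposition4p17 (C : Category) (Z : C)
  (hZ : is_zero_object C Z)
  (hlim : has_finite_limits C)
  (hprot : protomodular C Z)
  (hcent : centralizers_of_normal_monos_normal C Z)
  (A B : C)
  (hAab : is_abelian C Z A) (hAc : is_complete_star C A)
  (hBs : is_strong_complete C Z B)
  (hhom : forall f : Hom B A, is_zero_mor C Z f)
  (P : C) (p1 : Hom P B) (p2 : Hom P A)
  (hP : is_product C B A P p1 p2) :
  is_complete_star C P.
Proof.
  intros Y m hm.
  destruct (abelian_factor_retraction C Z hZ hlim hprot A B P p1 p2 hP hBs hcent
              hAab hAc hhom m hm) as [q Hq].
  destruct (strong_complete_factor_retraction C Z hZ hlim A B P p1 p2 hP hBs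
              m q hm Hq) as [r Hr].
  destruct (product_pair C hP r q) as [s [S1 S2]].
  exists s. apply (product_hom_ext C hP).
  - now rewrite comp_assoc, S1, Hr, comp_id_r.
  - now rewrite comp_assoc, S2, Hq, comp_id_r.
Qed.
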